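(* Let $\phi$ be a partial flow on a metric space $X$, let $\Lambda$ be an isolated set of $\phi$, and let $N$ be an isolating neighborhood of $\Lambda$. Then there is a $\phi$-convex open set $U$ with $\Lambda\subset U\subset N$.
   Context: A partial flow on a metric space $X$ is a continuous map $\phi\colon\Gamma\to X$, $\Gamma\subset\mathbb{R}\times X$ open. Here $\Gamma_x=\{t:(t,x)\in\Gamma\}$ is a connected set containing $0$, $\Gamma_{\phi_t(x)}=\Gamma_x-t$, $\phi_0=\mathrm{id}$, and $\phi_s\phi_t(x)=\phi_{s+t}(x)$ whenever $s,t,s+t\in\Gamma_x$. A $\phi$-invariant set $\Lambda$ (one with $\phi_t(x)\in\Lambda$ for $x\in\Lambda$, $t\in\Gamma_x$) is isolated if there is a compact neighborhood $N$ of $\Lambda$ (an isolating neighborhood) such that $\phi_{\Gamma_x}(x)\subseteq N$ implies $x\in\Lambda$. An open set $U$ is $\phi$-convex if, whenever $t\ge0$, $x\in U$, $\phi_t(x)\in U$ and $\phi_{[0,t]}(x)\subset\overline U$, we have $\phi_{[0,t]}(x)\subset U$. *)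

From Stdlib Require Import Reals List.
Open Scope R_scope.

Record MetricSpace := {
  carrier :> Type;
  dist : carrier -> carrier -> R;
  dist_nonneg : forall x y, 0 <= dist x y;
  dist_refl : forall x, dist x x = 0;
  dist_sep : forall x y, dist x y = 0 -> x = y;
  dist_sym : forall x y, dist x y = dist y x;
  dist_tri : forall x y z, dist x z <= dist x y + dist y z
}.

Section Defs.
Variable X : MetricSpace.

Definition is_open (U : X -> Prop) : Prop :=
  forall x, U x -> exists eps, 0 < eps /\ forall y, dist X x y < eps -> U y.

Definition is_open_RX (G : R -> X -> Prop) : Prop :=
  forall t x, G t x -> exists eps, 0 < eps /\
    forall s y, Rabs (s - t) < eps -> dist X x y < eps -> G s y.

Definition closure (U : X -> Prop) (x : X) : Prop :=
  forall eps, 0 < eps -> exists y, U y /\ dist X x y < eps.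

Definition compact (K : X -> Prop) : Prop :=
  forall (I : Type) (V : I -> X -> Prop),
    (forall i, is_open (V i)) ->
    (forall x, K x -> exists i, V i x) ->
    exists l : list I, forall x, K x -> exists i, In i l /\ V i x.

Definition neighborhood (N A : X -> Prop) : Prop :=
  forall x, A x -> exists eps, 0 < eps /\ forall y, dist X x y < eps -> N y.

(* A partial flow: domain G (G t x means (t,x) in Gamma), map phi t x,
   meaningful only on G. *)
Record partial_flow (G : R -> X -> Prop) (phi : R -> X -> X) : Prop := {
  pf_open : is_open_RX G;
  pf_cont : forall t x, G t x -> forall eps, 0 < eps -> exists delta, 0 < delta /\
      forall s y, G s y -> Rabs (s - t) < delta -> dist X x y < delta ->
        dist X (phi t x) (phi s y) < eps;
  pf_zero : forall x, G 0 x;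
  pf_conn : forall x a b c, G a x -> G b x -> a <= c <= b -> G c x;
  pf_shift : forall t x, G t x -> forall s, G s (phi t x) <-> G (s + t) x;
  pf_id : forall x, phi 0 x = x;
  pf_comp : forall s t x, G s x -> G t x -> G (s + t) x ->
      phi s (phi t x) = phi (s + t) x
}.

Definition invariant (G : R -> X -> Prop) (phi : R -> X -> X) (L : X -> Prop) :=
  forall x, L x -> forall t, G t x -> L (phi t x).

Definition isolating_neighborhood (G : R -> X -> Prop) (phi : R -> X -> X)
    (L N : X -> Prop) : Prop :=
  compact N /\ neighborhood N L /\
  forall x, (forall t, G t x -> N (phi t x)) -> L x.

Definition isolated (G : R -> X -> Prop) (phi : R -> X -> X) (L : X -> Prop) :=
  invariant G phi L /\ exists N, isolating_neighborhood G phi L N.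

Definition phi_convex (G : R -> X -> Prop) (phi : R -> X -> X) (U : X -> Prop) :=
  forall t x, 0 <= t -> G t x -> U x -> U (phi t x) ->
    (forall s, 0 <= s <= t -> closure U (phi s x)) ->
    forall s, 0 <= s <= t -> U (phi s x).

End Defs.

(* Let U_T be the set of points whose orbit segment over [-T, T] is defined and
   stays in the interior of N.  It is open, and it contains the isolated set
   because orbits that stay in a compact set are defined for all time.  A point
   lying in the closure of every U_n has its whole orbit in N, so it belongs to
   the isolated set and hence to the interior of N; by compactness of N this
   already holds for the closure of a single U_m.  Then U_m is convex: along an
   orbit piece from x to phi_t x, times within m of either end are controlled by
   x or by phi_t x, and the remaining times land in the closure of U_m. *)
From Pilot Require Import Defs.
From Stdlib Require Import Reals List Lra Lia Classical.
Import Defs.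
Open Scope R_scope.

Lemma list_nat_bounded (l : list nat) : exists M, forall n, In n l -> (n <= M)%nat.
Proof.
  induction l as [|a l [M HM]].
  - exists 0%nat; intros n [].
  - exists (Nat.max a M); intros n [<-|Hn].
    + apply Nat.le_max_l.
    + specialize (HM n Hn); lia.
Qed.

Lemma inv_succ_pos (k : nat) : 0 < / INR (S k).
Proof. apply Rinv_0_lt_compat, lt_0_INR; lia. Qed.

Lemma inv_succ_le (k m : nat) : (k <= m)%nat -> / INR (S m) <= / INR (S k).
Proof. intro h; apply Rinv_le_contravar; [apply lt_0_INR; lia | apply le_INR; lia]. Qed.

Lemma inv_succ_lt (eps : R) : 0 < eps -> exists k, / INR (S k) < eps.
Proof.
  intro he; destruct (archimed_cor1 eps he) as [[|k] [Hk Hk0]]; [lia | now exists k].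
Qed.

Section MetricTopology.
Variable X : MetricSpace.

Definition interior (A : X -> Prop) (y : X) : Prop :=
  exists eps, 0 < eps /\ forall y', dist X y y' < eps -> A y'.

Lemma interior_subset (A : X -> Prop) y : interior A y -> A y.
Proof. intros [e [he H]]; apply H; rewrite dist_refl; lra. Qed.

Lemma interior_mono (A B : X -> Prop) :
  (forall y, A y -> B y) -> forall y, interior A y -> interior B y.
Proof. intros H y [e [he He]]; exists e; auto. Qed.

Lemma is_open_interior (A : X -> Prop) : is_open X (interior A).
Proof.
  intros y [e [he He]]; exists (e / 2); split; [lra|].
  intros y' hy'; exists (e / 2); split; [lra|].
  intros y'' hy''; apply He; pose proof (dist_tri X y y' y''); lra.
Qed.

Lemma is_open_not_closure (A : X -> Prop) : is_open X (fun y => ~ closure X A y).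
Proof.
  intros y Hy; apply not_all_ex_not in Hy; destruct Hy as [e He].
  apply imply_to_and in He; destruct He as [he He].
  exists (e / 2); split; [lra|]; intros y' hy' Hc.
  destruct (Hc (e / 2) ltac:(lra)) as [z [Az Dz]].
  apply He; exists z; split; auto; pose proof (dist_tri X y y' z); lra.
Qed.

Lemma is_open_or (A B : X -> Prop) :
  is_open X A -> is_open X B -> is_open X (fun y => A y \/ B y).
Proof.
  intros HA HB y [Ay|By].
  - destruct (HA y Ay) as [e [he He]]; exists e; auto.
  - destruct (HB y By) as [e [he He]]; exists e; auto.
Qed.

Lemma closure_mono (A B : X -> Prop) :
  (forall y, A y -> B y) -> forall y, closure X A y -> closure X B y.
Proof. intros H y Hc e he; destruct (Hc e he) as [z [Az Dz]]; exists z; auto. Qed.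

Lemma compact_increasing_cover (K : X -> Prop) (V : nat -> X -> Prop) :
  compact X K -> (forall n, is_open X (V n)) ->
  (forall n m x, (n <= m)%nat -> V n x -> V m x) ->
  (forall x, K x -> exists n, V n x) ->
  exists M, forall x, K x -> V M x.
Proof.
  intros HK Vopen Vmono Vcover.
  destruct (HK nat V Vopen Vcover) as [l Hl].
  destruct (list_nat_bounded l) as [M HM].
  exists M; intros x Kx; destruct (Hl x Kx) as [n [Hn Vn]].
  exact (Vmono n M x (HM n Hn) Vn).
Qed.

Lemma compact_closed (K : X -> Prop) : compact X K -> forall x, closure X K x -> K x.
Proof.
  intros HK x Hc; apply NNPP; intro Kx.
  destruct (compact_increasing_cover K (fun k y => / INR (S k) < dist X x y) HK)
    as [M HM].
  - intros k y Hy; exists (dist X x y - / INR (S k)); split; [lra|].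
    intros y' Hy'; pose proof (dist_tri X x y' y); pose proof (dist_sym X y' y); lra.
  - intros n m y hnm Hy; pose proof (inv_succ_le n m hnm); lra.
  - intros y Ky.
    assert (hxy : 0 < dist X x y).
    { destruct (dist_nonneg X x y) as [h|h]; auto.
      symmetry in h; apply dist_sep in h; subst; contradiction. }
    destruct (inv_succ_lt _ hxy) as [k Hk]; now exists k.
  - destruct (Hc _ (inv_succ_pos M)) as [y [Ky Dy]].
    specialize (HM y Ky); lra.
Qed.

Lemma tube_lemma (P : R -> X -> Prop) (x : X) (a b : R) : a <= b ->
  (forall r, a <= r <= b -> exists d, 0 < d /\
     forall s y, Rabs (s - r) < d -> dist X x y < d -> P s y) ->
  exists e, 0 < e /\ forall y, dist X x y < e -> forall r, a <= r <= b -> P r y.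
Proof.
  intros hab Hloc.
  set (tube_up_to := fun c => exists e, 0 < e /\
         forall y, dist X x y < e -> forall r, a <= r <= c -> P r y).
  set (E := fun c => a <= c <= b /\ tube_up_to c).
  assert (Ea : E a).
  { split; [lra|]; destruct (Hloc a ltac:(lra)) as [d [hd Hd]].
    exists d; split; auto; intros y hy r hr; apply Hd; auto.
    replace (r - a) with 0 by lra; rewrite Rabs_R0; lra. }
  destruct (completeness E (ex_intro _ b (fun c Ec => proj2 (proj1 Ec)))
              (ex_intro _ a Ea)) as [m [Hub Hlub]].
  assert (am : a <= m) by (apply Hub; auto).
  assert (mb : m <= b) by (apply Hlub; intros c [hc _]; lra).
  destruct (Hloc m ltac:(lra)) as [d [hd Hd]].
  assert (Hnear : exists c, E c /\ m - d < c).
  { apply NNPP; intro Hn.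
    assert (m <= m - d) by
      (apply Hlub; intros c Ec; apply Rnot_lt_le; intro hc; apply Hn; eauto).
    lra. }
  destruct Hnear as [c [[hc [e [he He]]] hcm]].
  (* the tube up to c extends across the neighbourhood of m, past m unless m = b *)
  set (c' := Rmin b (m + d / 2)).
  assert (c'_le_b : c' <= b) by apply Rmin_l.
  assert (c'_le : c' <= m + d / 2) by apply Rmin_r.
  assert (Tc' : tube_up_to c').
  { exists (Rmin e d); split; [apply Rmin_pos; lra|]; intros y hy r hr.
    pose proof (Rmin_l e d); pose proof (Rmin_r e d).
    destruct (Rle_dec r c); [apply He; lra|].
    apply Hd; [apply Rabs_def1|]; lra. }
  assert (c'_le_m : c' <= m) by (apply Hub; split; [split|]; auto; apply Rmin_glb; lra).
  replace b with c'; auto.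
  unfold c' in *; destruct (Rle_dec b (m + d / 2)).
  - now rewrite Rmin_left.
  - rewrite Rmin_right in c'_le_m; lra.
Qed.

End MetricTopology.

Section IsolatingNeighborhood.
Variable X : MetricSpace.
Variable G : R -> X -> Prop.
Variable phi : R -> X -> X.
Variable N : X -> Prop.
Hypothesis pf : partial_flow X G phi.

Lemma uniform_time_domain :
  compact X N -> exists e, 0 < e /\ forall y, N y -> forall s, Rabs s < e -> G s y.
Proof.
  intro HK.
  set (short_times := fun k y => forall s, Rabs s < / INR (S k) -> G s y).
  destruct (compact_increasing_cover X N (fun k => interior X (short_times k)) HK)
    as [M HM].
  - intro k; apply is_open_interior.
  - intros n m y hnm; apply interior_mono; intros y' Hy' s hs.
    pose proof (inv_succ_le n m hnm); apply Hy'; lra.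
  - intros y _; destruct (pf_open _ _ _ pf 0 y (pf_zero _ _ _ pf y)) as [e [he He]].
    destruct (inv_succ_lt e he) as [k hk]; exists k, e; split; auto.
    intros y' hy' s hs; apply He; auto; rewrite Rminus_0_r; lra.
  - exists (/ INR (S M)); split; [apply inv_succ_pos|].
    intros y Ny; exact (interior_subset X _ y (HM y Ny)).
Qed.

Lemma orbit_in_compact_defined :
  compact X N -> forall x, (forall r, G r x -> N (phi r x)) -> forall t, G t x.
Proof.
  intros HK x Hx t; destruct (uniform_time_domain HK) as [e [he He]].
  (* each step of length e/2 starts from a point of N *)
  assert (Hsteps : forall k, G (INR k * (e / 2)) x /\ G (- (INR k * (e / 2))) x).
  { induction k as [|k [IH1 IH2]].
    - simpl; rewrite Rmult_0_l, Ropp_0; split; apply (pf_zero _ _ _ pf).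
    - rewrite S_INR; split.
      + replace ((INR k + 1) * (e / 2)) with (e / 2 + INR k * (e / 2)) by ring.
        apply (pf_shift _ _ _ pf _ _ IH1), He; [apply Hx; auto|].
        rewrite Rabs_right; lra.
      + replace (- ((INR k + 1) * (e / 2))) with (- (e / 2) + - (INR k * (e / 2)))
          by ring.
        apply (pf_shift _ _ _ pf _ _ IH2), He; [apply Hx; auto|].
        rewrite Rabs_left; lra. }
  destruct (INR_archimed (e / 2) (Rabs t) ltac:(lra)) as [k hk].
  destruct (Hsteps k) as [Hfwd Hbwd].
  apply (pf_conn _ _ _ pf x _ _ _ Hbwd Hfwd).
  pose proof (Rle_abs t); pose proof (Rle_abs (- t)); rewrite Rabs_Ropp in *; lra.
Qed.

Definition trapped (T : R) (x : X) : Prop :=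
  forall r, - T <= r <= T -> G r x /\ interior X N (phi r x).

Lemma trapped_antitone T1 T2 : T1 <= T2 -> forall x, trapped T2 x -> trapped T1 x.
Proof. intros h x H r hr; apply H; lra. Qed.

Lemma trapped_subset T : 0 <= T -> forall x, trapped T x -> N x.
Proof.
  intros hT x Hx; destruct (Hx 0 ltac:(lra)) as [_ W].
  rewrite (pf_id _ _ _ pf) in W; exact (interior_subset X N x W).
Qed.

Lemma trapped_open T : 0 <= T -> is_open X (trapped T).
Proof.
  intros hT x Hx.
  destruct (tube_lemma X (fun s y => G s y /\ interior X N (phi s y)) x (- T) T
              ltac:(lra)) as [e [he He]].
  - intros r hr; destruct (Hx r hr) as [Gr [rho [hrho Hrho]]].
    destruct (pf_open _ _ _ pf r x Gr) as [e1 [he1 He1]].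
    destruct (pf_cont _ _ _ pf r x Gr (rho / 2) ltac:(lra)) as [d [hd Hd]].
    exists (Rmin e1 d); split; [apply Rmin_pos; auto|]; intros s y hs hy.
    pose proof (Rmin_l e1 d); pose proof (Rmin_r e1 d).
    assert (Gs : G s y) by (apply He1; lra).
    split; auto.
    assert (hc : dist X (phi r x) (phi s y) < rho / 2) by (apply Hd; auto; lra).
    exists (rho / 2); split; [lra|]; intros y' hy'; apply Hrho.
    pose proof (dist_tri X (phi r x) (phi s y) y'); lra.
  - exists e; split; [exact he|]; intros y hy r hr; apply He; auto.
Qed.

Lemma isolated_contains_trapped_limits (L : X -> Prop) :
  isolating_neighborhood X G phi L N ->
  forall z, (forall n : nat, closure X (trapped (INR n)) z) -> L z.
Proof.
  intros [HK [_ Hiso]] z Hz; apply Hiso; intros r Gr.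
  apply (compact_closed X N HK); intros eps heps.
  destruct (pf_cont _ _ _ pf r z Gr eps heps) as [d [hd Hd]].
  destruct (INR_unbounded (Rabs r)) as [n hn].
  destruct (Hz n d hd) as [y [Ty Dy]].
  assert (hr : - INR n <= r <= INR n).
  { pose proof (Rle_abs r); pose proof (Rle_abs (- r)); rewrite Rabs_Ropp in *; lra. }
  destruct (Ty r hr) as [Gy Wy]; exists (phi r y); split.
  - exact (interior_subset X N _ Wy).
  - apply Hd; auto; rewrite Rminus_diag, Rabs_R0; auto.
Qed.

Lemma closure_trapped_in_interior (L : X -> Prop) :
  isolating_neighborhood X G phi L N ->
  exists m : nat, forall z, closure X (trapped (INR m)) z -> interior X N z.
Proof.
  intros Hiso; pose proof Hiso as [HK [Hnb _]].
  destruct (compact_increasing_cover X N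
              (fun n y => interior X N y \/ ~ closure X (trapped (INR n)) y) HK)
    as [M HM].
  - intro n; apply is_open_or; [apply is_open_interior | apply is_open_not_closure].
  - intros n m y hnm [W|nC]; [now left | right; intro C; apply nC].
    revert C; apply closure_mono, trapped_antitone, le_INR, hnm.
  - intros y _; destruct (classic (exists n : nat, ~ closure X (trapped (INR n)) y))
      as [[n Hn]|Hall]; [now exists n; right|].
    exists 0%nat; left; apply Hnb, (isolated_contains_trapped_limits L Hiso).
    intro n; apply NNPP; intro h; apply Hall; eauto.
  - exists M; intros z Hz.
    assert (Nz : N z).
    { apply (compact_closed X N HK); revert Hz; apply closure_mono.
      apply trapped_subset, pos_INR. }
    destruct (HM z Nz) as [W|nC]; [exact W | contradiction].
Qed.

Lemma trapped_convex T : 0 <= T ->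
  (forall z, closure X (trapped T) z -> interior X N z) ->
  phi_convex X G phi (trapped T).
Proof.
  intros hT Hcl t x ht Gt Tx Ttx Hpath s hs r hr.
  assert (Gs : G s x)
    by (apply (pf_conn _ _ _ pf x _ _ _ (pf_zero _ _ _ pf x) Gt); lra).
  assert (Gr : G r x) by (apply (Tx r); lra).
  assert (Grs : G (r + s) x).
  { assert (G (- T) x) by (apply (Tx (- T)); lra).
    assert (G (T + t) x) by (apply (pf_shift _ _ _ pf t x Gt T), (Ttx T); lra).
    apply (pf_conn _ _ _ pf x (- T) (T + t)); auto; lra. }
  split; [apply (pf_shift _ _ _ pf s x Gs r), Grs|].
  rewrite (pf_comp _ _ _ pf r s x Gr Gs Grs).
  destruct (Rle_dec (r + s) T) as [near_x|]; [apply (Tx (r + s)); lra|].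
  destruct (Rle_dec (t - T) (r + s)) as [near_tx|]; [|apply Hcl, Hpath; lra].
  set (u := r + s - t).
  assert (Gu : G u x) by (apply (Tx u); unfold u; lra).
  assert (Gut : G (u + t) x) by (unfold u; replace (r + s - t + t) with (r + s) by ring; auto).
  destruct (Ttx u ltac:(unfold u; lra)) as [_ W].
  rewrite (pf_comp _ _ _ pf u t x Gu Gt Gut) in W.
  unfold u in W; replace (r + s - t + t) with (r + s) in W by ring; exact W.
Qed.

End IsolatingNeighborhood.

Theorem mainTheorem3 (X : MetricSpace) (G : R -> X -> Prop) (phi : R -> X -> X)
  (L N : X -> Prop) :
  partial_flow X G phi ->
  isolated X G phi L ->
  isolating_neighborhood X G phi L N ->
  exists U : X -> Prop,
    is_open X U /\ phi_convex X G phi U /\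
    (forall x, L x -> U x) /\ (forall x, U x -> N x).
Proof.
  intros pf [Linv _] Hiso.
  destruct (closure_trapped_in_interior X G phi N pf L Hiso) as [m Hm].
  pose proof (pos_INR m) as hm.
  destruct Hiso as [HK [Hnb _]].
  exists (trapped X G phi N (INR m)); split; [|split; [|split]].
  - apply trapped_open; auto.
  - apply trapped_convex; auto.
  - intros x Lx r _.
    assert (Gr : G r x).
    { apply (orbit_in_compact_defined X G phi N pf HK x); intros t Gt.
      apply (interior_subset X N), Hnb, Linv; auto. }
    split; [exact Gr | apply Hnb, Linv; auto].
  - apply trapped_subset; auto.
Qed.
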